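(* Let $\mathcal{H}=(V,E)$ be a linear hypergraph without loop with $n$ vertices, and suppose $E=E'\sqcup E''$ where, with $\mathcal{H}'=(V,E')$: $\mathrm{ar}(\mathcal{H}')\ge\sqrt{n}$; $|e|<\sqrt{n}$ for all $e\in E''$; and for every $e\in E''$ there is $x_0\in e$ with $\mathrm{deg}_{\mathcal{H}}(x_0)\le|e|$. Then $\mathrm{q}(\mathcal{H})\le n$.
   Context: A hypergraph $\mathcal{H}=(V,E)$ has a finite vertex set $V$ and a finite set $E$ of nonempty subsets of $V$ (hyperedges); a loop is a hyperedge with one element; linear means distinct hyperedges share at most one vertex. $\mathrm{deg}_{\mathcal{H}}(x)$ is the number of hyperedges containing $x$. The antirank $\mathrm{ar}$ is the minimum cardinality of a hyperedge ($\infty$ if there are none). The chromatic index $\mathrm{q}(\mathcal{H})$ is the least number of colors in a coloring of hyperedges where distinct intersecting hyperedges get different colors. *)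

From mathcomp Require Import all_boot.
Set Implicit Arguments. Unset Strict Implicit. Unset Printing Implicit Defensive.

Definition hypergraph (V : finType) (E : {set {set V}}) : Prop :=
  forall e, e \in E -> e != set0.

Definition loopless (V : finType) (E : {set {set V}}) : Prop :=
  forall e, e \in E -> #|e| != 1.

Definition linear (V : finType) (E : {set {set V}}) : Prop :=
  forall e f, e \in E -> f \in E -> e != f -> #|e :&: f| <= 1.

Definition hdeg (V : finType) (E : {set {set V}}) (x : V) : nat :=
  #|[set e in E | x \in e]|.

(* Antirank: minimum cardinality of a hyperedge, None standing for +infinity.
   (Every hyperedge has at most #|V| elements, so #|V| is a neutral start.) *)
Definition antirank (V : finType) (E : {set {set V}}) : option nat :=
  if E == set0 then None else Some (\big[minn/#|V|]_(e in E) #|e|).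

Definition edge_coloring (V : finType) (E : {set {set V}}) (k : nat) :=
  {ffun {e : {set V} | e \in E} -> 'I_k}.

Definition proper_coloringb (V : finType) (E : {set {set V}}) (k : nat)
    (c : edge_coloring E k) : bool :=
  [forall e, forall f, (e != f) && (val e :&: val f != set0) ==> (c e != c f)].

Definition colorable (V : finType) (E : {set {set V}}) (k : nat) : bool :=
  [exists c : edge_coloring E k, proper_coloringb c].

Lemma colorable_card (V : finType) (E : {set {set V}}) :
  colorable E #|{: {e : {set V} | e \in E}}|.
Proof.
apply/existsP; exists [ffun e => enum_rank e]; apply/forallP => e; apply/forallP => f.
apply/implyP => /andP [nef _]; rewrite !ffunE.
by apply: contra nef => /eqP /enum_rank_inj ->.
Qed.

Lemma colorable_ex (V : finType) (E : {set {set V}}) : exists k, colorable E k.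
Proof. by exists #|{: {e : {set V} | e \in E}}|; exact: colorable_card. Qed.

Definition chromatic_index (V : finType) (E : {set {set V}}) : nat :=
  ex_minn (colorable_ex E).

(* Colour the edges greedily, always removing an edge that meets fewer than
   n = #|V| other edges; this only fails if some nonempty subhypergraph G has
   every edge meeting at least n others.  Let e be a smallest edge of such a G,
   of size s.  By linearity the edges of G through a vertex x of e, with x
   removed, are disjoint subsets of V \ e of size at least s - 1, so there are
   at most (n - s)/(s - 1) of them.  Since e meets at least n edges, every
   vertex of e then lies on at least s edges other than e.  This excludes a
   vertex of degree at most s on e, hence s^2 >= n, and then every count is
   tight: s^2 = n and G is an affine plane of order s.  By linearity G is all
   of E, and an affine plane is properly coloured by its s + 1 <= n parallel
   classes. *)

From mathcomp Require Import all_boot zify.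
Set Implicit Arguments. Unset Strict Implicit. Unset Printing Implicit Defensive.

Lemma card_bigcup_disjoint (I T : finType) (A : {pred I}) (F : I -> {set T}) :
  {in A &, forall i j, i != j -> [disjoint F i & F j]} ->
  #|\bigcup_(i in A) F i| = \sum_(i in A) #|F i|.
Proof.
move=> disF; rewrite big_mkcond /= -sum1_card (partition_disjoint_bigcup _ (fun=> 1)).
  by rewrite [RHS]big_mkcond; apply: eq_bigr => i _; case: ifP; rewrite sum1_card ?cards0.
move=> i j ij; case: ifP => iA; case: ifP => jA; rewrite -?setI_eq0 ?setI0 ?set0I //.
by rewrite setI_eq0 disF.
Qed.

Lemma leq_card_bigcup (I T : finType) (A : {pred I}) (F : I -> {set T}) :
  #|\bigcup_(i in A) F i| <= \sum_(i in A) #|F i|.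
Proof.
elim/big_rec2: _ => [|i n U _ le_U]; first by rewrite cards0.
by rewrite (leq_trans (leq_card_setU _ _)) ?leq_add2l.
Qed.

Definition neighbours (V : finType) (G : {set {set V}}) (e : {set V}) :=
  [set f in G | (f != e) && (f :&: e != set0)].

Definition proper_coloring (V : finType) (F : {set {set V}}) (k : nat)
    (c : {set V} -> nat) :=
  {in F, forall f, c f < k} /\
  {in F &, forall f g, f != g -> f :&: g != set0 -> c f != c g}.

Lemma chromatic_index_le_proper (V : finType) (F : {set {set V}}) k c :
  proper_coloring F k c -> chromatic_index F <= k.
Proof.
case=> c_lt c_proper; rewrite /chromatic_index; case: ex_minnP => m _; apply.
apply/existsP; exists [ffun f => Ordinal (c_lt _ (valP f))].
apply/forallP => f; apply/forallP => g; apply/implyP => /andP[fg fg0].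
by rewrite !ffunE -val_eqE; apply: c_proper; rewrite ?val_eqE ?(valP f) ?(valP g).
Qed.

Lemma exists_unused_color (T : finType) (N : {set T}) (c : T -> nat) k :
  #|N| < k -> exists2 i, i < k & {in N, forall f, c f != i}.
Proof.
move=> Nk; have : ~~ all (mem [seq c f | f <- enum N]) (iota 0 k).
  apply: contraL Nk => /allP used; rewrite -leqNgt.
  by have := uniq_leq_size (iota_uniq 0 k) used; rewrite size_iota size_map -cardE.
case/allPn => i; rewrite mem_iota => /= ik unused; exists i => // f fN.
by apply: contraNneq unused => <-; apply: map_f; rewrite mem_enum.
Qed.

Lemma greedy_coloring (V : finType) (F : {set {set V}}) k :
  (forall G : {set {set V}}, G \subset F -> G != set0 ->
     exists2 e, e \in G & #|neighbours G e| < k) ->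
  exists c, proper_coloring F k c.
Proof.
have [m] := ubnP #|F|; elim: m F => // m IHm F ltF degenerate.
have [->|F0] := eqVneq F set0; first by exists (fun=> 0); split=> f; rewrite inE.
have [e eF lt_e] := degenerate F (subxx F) F0.
have ltF' : #|F :\ e| < m by rewrite (cardsD1 e F) eF in ltF.
have [c [c_lt c_proper]] := IHm (F :\ e) ltF'
  (fun G sGF => degenerate G (subset_trans sGF (subsetDl F _))).
have [i ik i_unused] := exists_unused_color c lt_e.
exists (fun f => if f == e then i else c f); split=> [f fF | f g fF gF fg fg0].
  by case: eqP => // /eqP fe; rewrite c_lt // !inE fe.
have in_nbh h : h \in F -> h != e -> h :&: e != set0 -> h \in neighbours F e.
  by move=> hF he he0; rewrite !inE hF he.
case: (eqVneq f e) => [fe|fe]; case: (eqVneq g e) => [ge|ge].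
- by rewrite fe ge eqxx in fg.
- by rewrite eq_sym i_unused // in_nbh // -fe setIC.
- by rewrite i_unused // in_nbh // -ge.
- by rewrite c_proper // !inE ?fe ?ge.
Qed.

Definition pencil (V : finType) (G : {set {set V}}) (e : {set V}) (x : V) :=
  [set f in G | (x \in f) && (f != e)].

Lemma linear_edge_eq (V : finType) (G : {set {set V}}) f g u v :
  linear G -> f \in G -> g \in G ->
  u \in f -> u \in g -> v \in f -> v \in g -> u != v -> f = g.
Proof.
move=> linG fG gG uf ug vf vg uv; apply/eqP; apply: contraT => fg.
have /card_le1_eqP/(_ u v) := linG f g fG gG fg.
by rewrite !inE uf ug vf vg => /(_ isT isT) eq_uv; rewrite eq_uv eqxx in uv.
Qed.

Lemma hdeg_pencil (V : finType) (G : {set {set V}}) e x :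
  e \in G -> x \in e -> hdeg G x = #|pencil G e x|.+1.
Proof.
move=> eG xe; rewrite /hdeg (cardsD1 e) !inE eG xe; congr (_.+1).
by apply: eq_card => f; rewrite !inE andbC andbA.
Qed.

Lemma card_neighbours_le (V : finType) (G : {set {set V}}) e :
  #|neighbours G e| <= \sum_(x in e) #|pencil G e x|.
Proof.
apply: leq_trans (leq_card_bigcup _ _); apply/subset_leq_card/subsetP => f.
rewrite !inE => /and3P[fG fe /set0Pn[x /setIP[xf xe]]].
by apply/bigcupP; exists x; rewrite // !inE fG xf.
Qed.

Section Pencil.

Variables (V : finType) (G : {set {set V}}) (e : {set V}) (x : V).
Hypotheses (linG : linear G) (eG : e \in G) (xe : x \in e).

Lemma card_pencil_cover :
  #|\bigcup_(f in pencil G e x) (f :\ x)| = \sum_(f in pencil G e x) #|f :\ x|.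
Proof.
apply: card_bigcup_disjoint => f g; rewrite !inE => /and3P[fG xf _] /and3P[gG xg _] fg.
rewrite -setI_eq0; apply: contraR fg => /set0Pn[z].
rewrite !inE => /andP[/andP[zx zf] /andP[_ zg]].
by rewrite (linear_edge_eq linG fG gG zf zg xf xg zx).
Qed.

Lemma pencil_cover_sub : \bigcup_(f in pencil G e x) (f :\ x) \subset ~: e.
Proof.
apply/bigcupsP => f; rewrite !inE => /and3P[fG xf fe]; apply/subsetP => z.
rewrite !inE => /andP[zx zf]; apply: contraNN fe => ze.
by rewrite (linear_edge_eq linG fG eG zf ze xf xe zx).
Qed.

Lemma sum_pencil_le : \sum_(f in pencil G e x) #|f :\ x| <= #|V| - #|e|.
Proof.
rewrite -card_pencil_cover (leq_trans (subset_leq_card pencil_cover_sub)) //.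
by rewrite cardsCs setCK.
Qed.

Hypothesis e_min : {in G, forall f : {set V}, #|e| <= #|f|}.

Lemma pencil_edge_card_ge f : f \in pencil G e x -> #|e| - 1 <= #|f :\ x|.
Proof.
rewrite !inE => /and3P[fG xf _].
by have := e_min fG; have := cardsD1 x f; rewrite xf; lia.
Qed.

Lemma pencil_card_bound : #|pencil G e x| * (#|e| - 1) <= #|V| - #|e|.
Proof.
by rewrite -sum_nat_const (leq_trans (leq_sum _ pencil_edge_card_ge)) ?sum_pencil_le.
Qed.

Hypothesis pencil_tight : #|V| - #|e| <= #|pencil G e x| * (#|e| - 1).

Lemma pencil_edge_card f : f \in pencil G e x -> #|f| = #|e|.
Proof.
move=> fP; have := fP; rewrite inE => /and3P[fG xf _].
have : \sum_(g in pencil G e x) (#|e| - 1) == \sum_(g in pencil G e x) #|g :\ x|.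
  rewrite eqn_leq (leq_sum _ pencil_edge_card_ge) sum_nat_const /=.
  exact: leq_trans sum_pencil_le pencil_tight.
rewrite (leqif_sum (fun g gP => leqif_eq (pencil_edge_card_ge gP))).2.
move=> /forall_inP/(_ f fP)/eqP; rewrite (cardsD1 x f) xf.
by have := e_min fG; have := cardsD1 x e; rewrite xe; lia.
Qed.

Lemma pencil_joins v : v != x -> exists2 f, f \in G & (x \in f) && (v \in f).
Proof.
move=> vx; have [ve|ve] := boolP (v \in e); first by exists e; rewrite ?xe.
have cover : \bigcup_(f in pencil G e x) (f :\ x) = ~: e.
  apply/eqP; rewrite eqEcard pencil_cover_sub cardsCs setCK card_pencil_cover /=.
  rewrite (leq_trans pencil_tight) // -sum_nat_const.
  exact: leq_sum _ pencil_edge_card_ge.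
have : v \in ~: e by rewrite inE.
rewrite -cover => /bigcupP[f]; rewrite !inE => /and3P[fG xf _] /andP[_ vf].
by exists f; rewrite ?xf.
Qed.

End Pencil.

Definition affine_at (V : finType) (G : {set {set V}}) (k : nat) (x : V) :=
  [/\ hdeg G x = k.+1, {in G, forall f : {set V}, x \in f -> #|f| = k}
    & forall v, v != x -> exists2 f, f \in G & (x \in f) && (v \in f)].

Section CrowdedEdge.

Variables (V : finType) (G : {set {set V}}) (e : {set V}).
Hypotheses (linG : linear G) (eG : e \in G).
Hypotheses (e_min : {in G, forall f : {set V}, #|e| <= #|f|}) (e_gt1 : 1 < #|e|).
Hypothesis crowded : #|V| <= #|neighbours G e|.

Lemma crowded_pencil_ge x : x \in e -> #|e| <= #|pencil G e x|.
Proof.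
move=> xe; set s := #|e|; set n := #|V|.
have bound y : y \in e -> #|pencil G e y| * (s - 1) <= n - s.
  by move=> ye; apply: pencil_card_bound.
have rest : \sum_(y in e :\ x) #|pencil G e y| * (s - 1) <= (s - 1) * (n - s).
  apply: leq_trans (leq_sum _ (fun y yex => bound y (setD1P yex).2)) _.
  have card_rest : #|e :\ x| = s - 1 by have := cardsD1 x e; rewrite xe; lia.
  by rewrite sum_nat_const card_rest mulnC.
have total :
    n * (s - 1) <= (#|pencil G e x| + \sum_(y in e :\ x) #|pencil G e y|) * (s - 1).
  by rewrite leq_mul2r (leq_trans crowded) ?orbT // -big_setD1 // card_neighbours_le.
rewrite mulnDl big_distrl /= in total.
have s_le_n : s <= n := max_card e.
move: rest total; rewrite -(leq_pmul2r (_ : 0 < s - 1)); last by rewrite subn_gt0.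
set t := #|pencil G e x|; set S := \sum_(_ in _) _; nia.
Qed.

Hypothesis e_large : #|V| <= #|e| ^ 2.

Lemma crowded_square : #|e| ^ 2 = #|V|.
Proof.
have [x xe] : exists x, x \in e by apply/set0Pn; rewrite -card_gt0; lia.
have := crowded_pencil_ge xe; have := pencil_card_bound linG eG xe e_min.
set t := #|pencil G e x|; nia.
Qed.

Lemma crowded_affine_at x : x \in e -> affine_at G #|e| x.
Proof.
move=> xe; have sq := crowded_square.
have card_pencil : #|pencil G e x| = #|e|.
  apply/eqP; rewrite eqn_leq crowded_pencil_ge // andbT.
  have := pencil_card_bound linG eG xe e_min; rewrite -sq.
  set t := #|pencil G e x|; nia.
have tight : #|V| - #|e| <= #|pencil G e x| * (#|e| - 1).
  by rewrite card_pencil -sq; nia.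
split; first by rewrite (hdeg_pencil eG xe) card_pencil.
- move=> f fG xf; have [-> //|fe] := eqVneq f e.
  by apply: (pencil_edge_card linG eG xe e_min tight); rewrite !inE fG xf fe.
- exact: pencil_joins linG eG xe e_min tight.
Qed.

End CrowdedEdge.

Definition affine_plane (V : finType) (G : {set {set V}}) (k : nat) :=
  [/\ 1 < k, #|V| = k ^ 2, {in G, forall f : {set V}, #|f| = k},
      forall x, hdeg G x = k.+1 &
      forall u v, u != v -> exists2 f, f \in G & (u \in f) && (v \in f)].

Definition parallel (V : finType) (f g : {set V}) := (f == g) || [disjoint f & g].

Lemma card_edges_meeting (V : finType) (E : {set {set V}}) L y :
  linear E -> L \in E -> y \notin L ->
  (forall v, v != y -> exists2 f, f \in E & (y \in f) && (v \in f)) ->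
  #|[set f in E | (y \in f) && ~~ [disjoint f & L]]| = #|L|.
Proof.
move=> linE LE yL joins; set M := [set f in E | _].
have zy z : z \in L -> z != y by move=> zL; apply: contraNneq yL => <-.
have cover : \bigcup_(f in M) (f :&: L) = L.
  apply/setP => z; apply/bigcupP/idP => [[f _ /setIP[_ //]] | zL].
  have [f fE /andP[yf zf]] := joins z (zy z zL).
  exists f; last by rewrite inE zf zL.
  by rewrite !inE fE yf -setI_eq0; apply/set0Pn; exists z; rewrite inE zf zL.
rewrite -[in RHS]cover card_bigcup_disjoint => [|f g].
  rewrite -sum1_card; apply: eq_bigr => f; rewrite !inE => /and3P[fE yf fL].
  apply/eqP; rewrite eqn_leq linE //; last by apply: contraNneq yL => <-.
  by rewrite card_gt0 setI_eq0 fL.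
rewrite !inE => /and3P[fE yf _] /and3P[gE yg _] fg.
rewrite -setI_eq0; apply: contraR fg => /set0Pn[z].
rewrite !inE => /andP[/andP[zf zL] /andP[zg _]].
by rewrite (linear_edge_eq linE fE gE zf zg yf yg (zy z zL)).
Qed.

Section AffinePlane.

Variables (V : finType) (E : {set {set V}}) (k : nat).
Hypotheses (linE : linear E) (affE : affine_plane E k).

Lemma card_parallels L y : L \in E -> y \notin L ->
  #|[set f in E | (y \in f) && [disjoint f & L]]| = 1.
Proof.
move=> LE yL; have [_ _ sizes deg joins] := affE.
have := cardsID [set f : {set V} | ~~ [disjoint f & L]] [set f in E | y \in f].
rewrite (_ : _ :&: _ = [set f in E | (y \in f) && ~~ [disjoint f & L]]); last first.
  by apply/setP => f; rewrite !inE andbA.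
rewrite (_ : _ :\: _ = [set f in E | (y \in f) && [disjoint f & L]]); last first.
  by apply/setP => f; rewrite !inE negbK [RHS]andbA andbC.
rewrite card_edges_meeting // => [|v vy]; last by apply: joins; rewrite eq_sym.
by rewrite sizes // -/(hdeg E y) deg -addn1 => /addnI.
Qed.

Lemma parallel_eq L f g : L \in E -> f \in E -> g \in E ->
  parallel f L -> parallel g L -> f :&: g != set0 -> f = g.
Proof.
move=> LE fE gE /orP[/eqP-> | fL] /orP[/eqP-> | gL] fg0 //.
- by rewrite -setI_eq0 setIC (negbTE fg0) in gL.
- by rewrite -setI_eq0 (negbTE fg0) in fL.
have /set0Pn[y /setIP[yf yg]] := fg0.
have /card_le1_eqP/(_ f g) := eq_leq (card_parallels LE (negbT (disjointFr fL yf))).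
by rewrite !inE fE gE yf yg fL gL => /(_ isT isT).
Qed.

Lemma affine_plane_coloring : exists c, proper_coloring E #|V| c.
Proof.
have [k_gt1 card_V _ deg _] := affE.
have /card_gt0P[x0 _] : 0 < #|V| by rewrite card_V expn_gt0; lia.
pose star := [set L in E | x0 \in L].
have rep_ex f : f \in E -> exists L, (L \in star) && parallel f L.
  move=> fE; have [x0f|x0f] := boolP (x0 \in f).
    by exists f; rewrite !inE fE x0f /parallel eqxx.
  have /card_gt0P[L] : 0 < #|[set L in E | (x0 \in L) && [disjoint L & f]]|.
    by rewrite card_parallels.
  rewrite !inE => /and3P[LE x0L Lf].
  by exists L; rewrite !inE LE x0L /parallel disjoint_sym Lf orbT.
pose rep f := odflt f [pick L in star | parallel f L].
have rep_spec f : f \in E -> (rep f \in star) && parallel f (rep f).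
  by move=> /rep_ex[L LP]; rewrite /rep; case: pickP => [L' -> // | /(_ L)]; rewrite LP.
exists (fun f => index (rep f) (enum star)); split.
  move=> f fE; have /andP[repS _] := rep_spec f fE.
  rewrite (leq_trans (_ : _ < size (enum star))) ?index_mem ?mem_enum //.
  by rewrite -cardE card_V -/(hdeg E x0) deg; nia.
move=> f g fE gE fg fg0; apply: contra fg => /eqP same; apply/eqP.
have /andP[fS fpar] := rep_spec f fE; have /andP[gS gpar] := rep_spec g gE.
have rep_fg : rep f = rep g by apply: (index_inj set0 (s := enum star)); rewrite ?mem_enum.
have := fS; rewrite inE => /andP[repE _].
by apply: (parallel_eq repE) => //; rewrite rep_fg.
Qed.

End AffinePlane.

Lemma linear_sub (V : finType) (E G : {set {set V}}) :
  linear E -> G \subset E -> linear G.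
Proof. by move=> linE /subsetP sGE f g /sGE fE /sGE gE; apply: linE. Qed.

Section SparseOrLarge.

Variables (V : finType) (E : {set {set V}}).
Hypotheses (linE : linear E) (E_gt1 : {in E, forall e : {set V}, 1 < #|e|}).
Hypothesis sparse_or_large : {in E, forall e : {set V},
  (exists2 x, x \in e & hdeg E x <= #|e|) \/ #|V| <= #|e| ^ 2}.

Implicit Types (G : {set {set V}}) (e : {set V}).

Lemma crowded_min_edge_large G e : G \subset E -> e \in G ->
  {in G, forall f : {set V}, #|e| <= #|f|} -> #|V| <= #|neighbours G e| ->
  #|V| <= #|e| ^ 2.
Proof.
move=> sGE eG e_min crowded; have eE := subsetP sGE e eG.
have [[x xe deg_x] | //] := sparse_or_large eE.
have := crowded_pencil_ge (linear_sub linE sGE) eG e_min (E_gt1 eE) crowded xe.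
have : pencil G e x \subset pencil E e x.
  by apply/subsetP => f; rewrite !inE => /andP[/(subsetP sGE) ->].
by move=> /subset_leq_card; have := hdeg_pencil eE xe; lia.
Qed.

Lemma crowded_affine G : G \subset E -> G != set0 ->
  (forall e, e \in G -> #|V| <= #|neighbours G e|) -> exists k, affine_plane G k.
Proof.
move=> sGE /set0Pn[f0 f0G] crowded; have linG := linear_sub linE sGE.
have [e eG e_min] := arg_minnP (fun f : {set V} => #|f|) f0G.
have e_large := crowded_min_edge_large sGE eG e_min (crowded e eG).
have gt1 f : f \in G -> 1 < #|f| by move=> /(subsetP sGE) /E_gt1.
have at_min_edge f x : f \in G -> #|f| = #|e| -> x \in f -> affine_at G #|e| x.
  move=> fG fe xf; rewrite -fe.
  apply: (crowded_affine_at linG fG _ (gt1 f fG) (crowded f fG)) xf => [g gG|].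
    by rewrite fe e_min.
  by rewrite fe.
have [x0 x0e] : exists x0, x0 \in e by apply/card_gt0P; rewrite ltnW ?gt1.
have at_vertex v : affine_at G #|e| v.
  have [ve|ve] := boolP (v \in e); first exact: at_min_edge eG erefl ve.
  have [_ sz_x0 joins_x0] := at_min_edge e x0 eG erefl x0e.
  have vx0 : v != x0 by apply: contraNneq ve => ->.
  have [f fG /andP[x0f vf]] := joins_x0 v vx0.
  exact: at_min_edge fG (sz_x0 f fG x0f) vf.
exists #|e|; split.
- exact: gt1.
- exact/esym/(crowded_square linG eG e_min (gt1 e eG) (crowded e eG) e_large).
- move=> f fG; have /card_gt0P[x xf] := ltnW (gt1 f fG).
  by have [_ sz _] := at_vertex x; apply: sz.
- by move=> x; have [] := at_vertex x.
- by move=> u v uv; have [_ _ joins] := at_vertex u; apply: joins; rewrite eq_sym.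
Qed.

Lemma affine_plane_eq G k : G \subset E -> affine_plane G k -> G = E.
Proof.
move=> sGE [_ _ _ _ joins]; apply/eqP; rewrite eqEsubset sGE; apply/subsetP => g gE.
have /card_gt1P[u [v [ug vg uv]]] := E_gt1 gE.
have [f fG /andP[uf vf]] := joins u v uv.
by rewrite -(linear_edge_eq linE (subsetP sGE f fG) gE uf ug vf vg uv).
Qed.

Lemma low_edge_or_affine G : G \subset E -> G != set0 ->
  (exists2 e, e \in G & #|neighbours G e| < #|V|) \/ exists k, affine_plane G k.
Proof.
move=> sGE G0.
have [/exists_inP[e eG low] | /exists_inPn crowded] :=
  boolP [exists e in G, #|neighbours G e| < #|V|]; first by left; exists e.
by right; apply: crowded_affine => // e eG; rewrite leqNgt crowded.
Qed.

Theorem chromatic_index_le_card : chromatic_index E <= #|V|.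
Proof.
suff [c proper_c] : exists c, proper_coloring E #|V| c.
  exact: chromatic_index_le_proper proper_c.
have [->|E0] := eqVneq E set0; first by exists (fun=> 0); split=> f; rewrite inE.
have [[e eE low_e] | [k affE]] := low_edge_or_affine (subxx E) E0; last first.
  exact: affine_plane_coloring linE affE.
apply: greedy_coloring => G sGE G0.
have [// | [k affG]] := low_edge_or_affine sGE G0.
by rewrite (affine_plane_eq sGE affG); exists e.
Qed.

End SparseOrLarge.

Lemma bigmin_le (I : eqType) (r : seq I) (P : pred I) (F : I -> nat) m i :
  i \in r -> P i -> \big[minn/m]_(j <- r | P j) F j <= F i.
Proof.
elim: r => //= j r IHr; rewrite inE big_cons => /predU1P[<- -> | ir Pi].
  exact: geq_minl.
have le_r := IHr ir Pi; case: ifP => _ //; exact: leq_trans (geq_minr _ _) le_r.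
Qed.

Lemma antirank_le (V : finType) (E : {set {set V}}) e :
  e \in E -> exists2 a, antirank E = Some a & a <= #|e|.
Proof.
move=> eE; rewrite /antirank; case: eqP => [E0|_]; first by rewrite E0 inE in eE.
by eexists; [reflexivity | rewrite bigmin_le ?mem_index_enum].
Qed.

Theorem corollary5p7 (V : finType) (E E' E'' : {set {set V}}) :
  hypergraph E -> loopless E -> linear E ->
  E = E' :|: E'' -> [disjoint E' & E''] ->
  (match antirank E' with None => True | Some a => #|V| <= a ^ 2 end : Prop) ->
  (forall e, e \in E'' -> #|e| ^ 2 < #|V|) ->
  (forall e, e \in E'' -> exists2 x0, x0 \in e & hdeg E x0 <= #|e|) ->
  chromatic_index E <= #|V|.
Proof.
move=> nonempty loopless_E linE E_split _ antirank_large _ sparse.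
apply: chromatic_index_le_card => // e eE.
  by rewrite ltn_neqAle eq_sym loopless_E // card_gt0 (nonempty e eE).
rewrite E_split inE in eE; case/orP: eE => [eE' | /sparse low_deg]; last by left.
right; have [a ar_a a_le] := antirank_le eE'; rewrite ar_a in antirank_large.
by rewrite (leq_trans antirank_large) ?leq_exp2r.
Qed.
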